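(* Let $(S,m)$, $\phi:S'\to S''$ be as in the context, and let $k$, $\overline{S}$, $\psi_i$ be as constructed there. Then for all $i,j\in\mathbb{Z}/k$ and $s,t,s',t'\in S$ with $s\neq t$, $\psi_i(s)=\psi_j(s')$ and $\psi_i(t)=\psi_j(t')$, we have $s'\ne t'$ and $m(s,t)=m(s',t')$. Consequently the function $\overline{m}$ on 2-element subsets $\{x,y\}$ of $\overline{S}$ given by $\overline{m}(x,y)=m(s,t)$ if $x=\psi_i(s)$, $y=\psi_i(t)$ for some $i\in\mathbb{Z}/k$ and $s,t\in S$, and $\overline{m}(x,y)=\infty$ otherwise, is well defined.
   Context: $(S,m)$ is an Artin system: a finite set $S$ with a function $m$ from 2-element subsets of $S$ to $\{2,3,\dots\}\cup\{\infty\}$. $\phi:S'\to S''$ is a bijection between subsets of $S$ with $m(s,s')=m(\phi(s),\phi(s'))$ for all distinct $s,s'\in S'$. Let $\Lambda$ be the directed graph with vertex set $S$ and an edge $(s,\phi(s))$ for each $s\in S'$; it is a disjoint union of directed cycles and directed (non-closed) paths. Choose an integer $k$ that is a multiple of the length (number of edges) of each cycle in $\Lambda$ and strictly greater than twice the length of each path in $\Lambda$. Let $\overline{S}$ be the quotient of $\mathbb{Z}/k\times S$ by the equivalence relation generated by $(i,s)\sim(i+1,\phi(s))$ for $i\in\mathbb{Z}/k$, $s\in S'$, and let $\psi_i:S\to\overline{S}$ send $s$ to the class of $(i,s)$. *)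

From HB Require Import structures.
From mathcomp Require Import all_boot all_order all_algebra.
From Stdlib Require Import Relations.
Set Implicit Arguments. Unset Strict Implicit. Unset Printing Implicit Defensive.
Import Order.TTheory GRing.Theory Num.Theory.

(* Coxeter/Artin labels: [Some n] is the integer n, [None] is infinity. *)
Definition label := option nat.

(* (S,m) is an Artin system: m is defined on 2-element subsets, i.e. it is
   symmetric on distinct elements, with finite values >= 2.  (Diagonal values
   m s s are meaningless and unconstrained.) *)
Definition artin_system (S : finType) (m : S -> S -> label) : Prop :=
  (forall s t, s != t -> m s t = m t s) /\
  (forall s t n, s != t -> m s t = Some n -> (2 <= n)%N).

(* phi : S' -> S'' is a bijection onto S'' := phi @: S' (represented by a total
   function S -> S whose values off S' are irrelevant), preserving m. *)
Definition partial_iso (S : finType) (m : S -> S -> label)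
    (S' : {set S}) (phi : S -> S) : Prop :=
  {in S' &, injective phi} /\
  (forall s t, s \in S' -> t \in S' -> s != t -> m s t = m (phi s) (phi t)).

(* In the graph Lambda (edges s -> phi s for s in S'), the walk of n edges
   starting at s exists. *)
Definition walk (S : finType) (S' : {set S}) (phi : S -> S) (s : S) (n : nat) :=
  forall l, (l < n)%N -> iter l phi s \in S'.

Definition cycle_len (S : finType) (S' : {set S}) (phi : S -> S) (s : S) (n : nat) :=
  [/\ (0 < n)%N, walk S' phi s n, iter n phi s = s &
      forall l, (0 < l < n)%N -> iter l phi s != s].

(* A non-closed directed path component of Lambda: starts at a vertex s with
   no incoming edge (s \notin S''), and has n edges. *)
Definition path_len (S : finType) (S' : {set S}) (phi : S -> S) (s : S) (n : nat) :=
  [/\ s \notin phi @: S', walk S' phi s n & iter n phi s \notin S'].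

Definition admissible_k (S : finType) (S' : {set S}) (phi : S -> S) (k : int) :=
  (forall s n, cycle_len S' phi s n -> (n%:Z %| k)%Z) /\
  (forall s n, path_len S' phi s n -> (2 * n)%:Z < k)%R.

(* Generators of the equivalence relation on Z/k x S, modelled on Z x S:
   (i,s) ~ (i+k,s) encodes reduction modulo k, and (i,s) ~ (i+1, phi s). *)
Inductive gen_rel (S : finType) (S' : {set S}) (phi : S -> S) (k : int) :
    int * S -> int * S -> Prop :=
  | gen_phi i s : s \in S' -> gen_rel S' phi k (i, s) (i + 1, phi s)%R
  | gen_mod i s : gen_rel S' phi k (i, s) (i + k, s)%R.

(* psi_i(s) = psi_j(t) in Sbar  iff  (i,s) ~ (j,t). *)
Definition psi_eq (S : finType) (S' : {set S}) (phi : S -> S) (k : int)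
    (i : int) (s : S) (j : int) (t : S) : Prop :=
  clos_refl_sym_trans _ (gen_rel S' phi k) (i, s) (j, t).

From HB Require Import structures.
From mathcomp Require Import all_boot all_order all_algebra zify.
From Stdlib Require Import Classical.
Set Implicit Arguments. Unset Strict Implicit. Unset Printing Implicit Defensive.
Import GRing.Theory Num.Theory.

(* Say that (i,x) and (j,x') are linked when x and
   x' descend from a common vertex y of Lambda along walks of lengths a and b
   with j - i = b - a (mod k).  Linking is an equivalence relation containing
   the generators of the one defining Sbar, so psi_i(s) = psi_j(s') forces
   (i,s) and (j,s') to be linked, and likewise (i,t) and (j,t').

   The heart of the proof is that two such forks can be made parallel: there
   are vertices u, v and lengths e, f with s, t the e-th and s', t' the f-th
   iterates of u, v.  For this we use the dichotomy of the components of
   Lambda: a vertex either lies on a cycle, whose period divides k, so the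
   displacement along it only matters modulo k; or it lies on a path, whose
   walks are shorter than k/2, so a displacement known modulo k is known
   exactly.  Since phi is injective and preserves m on S', iterating it on
   the pair (u, v) keeps the two vertices distinct and preserves their label,
   which gives s' <> t' and m(s,t) = m(u,v) = m(s',t'). *)

Lemma dvdz_small (k D : int) : (k %| D)%Z -> (`|D| < k)%R -> D = 0%R.
Proof.
rewrite dvdzE => /dvdn_leq k_le_D small; apply/eqP; apply: contraTT small => D0.
have := k_le_D ltac:(by rewrite absz_gt0); lia.
Qed.

Section Lambda.

Variables (S : finType) (S' : {set S}) (phi : S -> S).
Hypothesis phi_inj : {in S' &, injective phi}.

Lemma walk_le x a b : a <= b -> walk S' phi x b -> walk S' phi x a.
Proof. by move=> ab w l la; apply: w; apply: leq_trans ab. Qed.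

Lemma walk_shift x a b : walk S' phi x (a + b) -> walk S' phi (iter a phi x) b.
Proof. by move=> w l lb; rewrite -iterD; apply: w; rewrite addnC ltn_add2l. Qed.

Lemma walk_cat x a b :
  walk S' phi x a -> walk S' phi (iter a phi x) b -> walk S' phi x (a + b).
Proof.
move=> wa wb l lab; case: (ltnP l a) => la; first exact: wa.
by rewrite -(subnKC la) addnC iterD; apply: wb; rewrite -(ltn_add2l a) subnKC.
Qed.

Lemma iter_cancel e x y :
  walk S' phi x e -> walk S' phi y e -> iter e phi x = iter e phi y -> x = y.
Proof.
elim: e x y => [|e IH] x y wx wy //= E.
apply: IH; [exact: walk_le wx | exact: walk_le wy |].
by apply: phi_inj => //; [apply: wx | apply: wy].
Qed.

Lemma walk_ancestor y z b c :
  walk S' phi y b -> walk S' phi z c -> iter b phi y = iter c phi z ->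
  b <= c -> y = iter (c - b) phi z.
Proof.
move=> wy wz E bc; apply: (iter_cancel wy).
- by apply: (@walk_shift _ (c - b)); rewrite subnK.
- by rewrite E -iterD subnKC.
Qed.

Definition fork (y : S) (a b : nat) (x x' : S) :=
  [/\ walk S' phi y a, walk S' phi y b, x = iter a phi y & x' = iter b phi y].

Lemma fork_rebase z e y a b x x' :
  walk S' phi z e -> y = iter e phi z -> fork y a b x x' ->
  fork z (e + a) (e + b) x x'.
Proof.
move=> wz -> [wa wb -> ->].
by split; [exact: walk_cat | exact: walk_cat | rewrite addnC iterD ..].
Qed.

Lemma fork_normalize y a b x x' :
  fork y a b x x' -> fork (iter (minn a b) phi y) (a - b) (b - a) x x'.
Proof.
have [ea eb] : a = minn a b + (a - b) /\ b = minn a b + (b - a) by lia.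
move=> [wa wb -> ->]; split.
- by apply: walk_shift; rewrite -ea.
- by apply: walk_shift; rewrite -eb.
- by rewrite -iterD addnC -ea.
- by rewrite -iterD addnC -eb.
Qed.

Lemma fork_trans y z a b c d x x' x'' :
  fork y a b x x' -> fork z c d x' x'' ->
  exists w a' d', fork w a' d' x x'' /\ (d'%:Z - a'%:Z = (b%:Z - a%:Z) + (d%:Z - c%:Z))%R.
Proof.
move=> Fy Fz; have [wya wyb Ex Ex'] := Fy; have [wzc wzd Ex'2 Ex''] := Fz.
have meet : iter b phi y = iter c phi z by rewrite -Ex' -Ex'2.
case: (leqP b c) => bc.
- have yz := walk_ancestor wyb wzc meet bc.
  have wz : walk S' phi z (c - b) by apply: walk_le wzc; apply: leq_subr.
  have [wa _ -> _] := fork_rebase wz yz Fy.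
  by exists z, (c - b + a), d; split; [split | lia].
- have zy := walk_ancestor wzc wyb (esym meet) (ltnW bc).
  have wy : walk S' phi y (b - c) by apply: walk_le wyb; apply: leq_subr.
  have [_ wd _ ->] := fork_rebase wy zy Fz.
  by exists y, a, (b - c + d); split; [split | lia].
Qed.

Section Linking.

Variable k : int.

Definition linked (p q : int * S) :=
  exists y a b, fork y a b p.2 q.2 /\ (k %| (q.1 - p.1 - (b%:Z - a%:Z))%R)%Z.

Lemma linked_refl p : linked p p.
Proof. by exists p.2, 0, 0; split; [split | rewrite !subrr dvdz0]. Qed.

Lemma linked_sym p q : linked p q -> linked q p.
Proof.
move=> [y [a [b [[wa wb Ep Eq] dv]]]]; exists y, b, a; split => //.
have -> : (p.1 - q.1 - (a%:Z - b%:Z) = - (q.1 - p.1 - (b%:Z - a%:Z)))%R by lia.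
by rewrite rpredN.
Qed.

Lemma linked_trans p q r : linked p q -> linked q r -> linked p r.
Proof.
move=> [y [a [b [Fy dv1]]]] [z [c [d [Fz dv2]]]].
have [w [a' [d' [Fw disp]]]] := fork_trans Fy Fz.
exists w, a', d'; split => //; rewrite disp.
have -> : (r.1 - p.1 - (b%:Z - a%:Z + (d%:Z - c%:Z)) =
           (q.1 - p.1 - (b%:Z - a%:Z)) + (r.1 - q.1 - (d%:Z - c%:Z)))%R by lia.
exact: rpredD.
Qed.

Lemma psi_eq_linked i s j t : psi_eq S' phi k i s j t -> linked (i, s) (j, t).
Proof.
rewrite /psi_eq; elim=> {i s j t} [p q gen | p | p q _ | p q r _ Hpq _ Hqr].
- case: gen => [i s sS | i s].
  + exists s, 0, 1; split; last by rewrite /= (addrC i) addrK subrr dvdz0.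
    by split => // -[].
  + exists s, 0, 0; split; last by rewrite /= subr0 (addrC i) addrK dvdzz.
    by split.
- exact: linked_refl.
- exact: linked_sym.
- exact: linked_trans Hpq Hqr.
Qed.

End Linking.

Lemma iter_period x p n : iter p phi x = x -> iter (n * p) phi x = x.
Proof. by move=> Ep; elim: n => [|n IH] //; rewrite mulSn iterD IH Ep. Qed.

Lemma iter_congr x p a b :
  iter p phi x = x -> (p%:Z %| (a%:Z - b%:Z)%R)%Z -> iter a phi x = iter b phi x.
Proof.
move=> Ep; wlog ba : a b / b <= a => [hyp|].
  case: (leqP b a) => [ba|/ltnW ab] dv; first exact: hyp.
  by symmetry; apply: hyp ab _; rewrite -rpredN opprB.
rewrite subzn // dvdzE !absz_nat => /dvdnP [n En].
by rewrite -(subnKC ba) iterD En iter_period.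
Qed.

Lemma periodic_all x p :
  0 < p -> walk S' phi x p -> iter p phi x = x -> forall l, iter l phi x \in S'.
Proof.
move=> p0 w Ep l; rewrite (divn_eq l p) addnC iterD iter_period //.
by apply: w; rewrite ltn_pmod.
Qed.

Lemma iter_repeat x : exists a b, a < b <= #|S| /\ iter a phi x = iter b phi x.
Proof.
pose g (i : 'I_#|S|.+1) := iter i phi x.
have : ~~ injectiveb g.
  by apply/injectiveP => /leq_card; rewrite card_ord ltnn.
case/injectivePn => i [j ij Eij].
case: (ltngtP i j) => [lt_ij|lt_ji|/val_inj eq_ij].
- by exists i, j; rewrite lt_ij -ltnS ltn_ord.
- by exists j, i; rewrite lt_ji -ltnS ltn_ord.
- by rewrite eq_ij eqxx in ij.
Qed.

Lemma forever_periodic x :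
  (forall l, iter l phi x \in S') -> exists2 p, 0 < p & iter p phi x = x.
Proof.
move=> all_in; have [a [b [/andP[ab _] E]]] := iter_repeat x.
have walk_orbit n y : y = iter n phi x -> forall e, walk S' phi y e.
  by move=> -> e l _; rewrite -iterD.
exists (b - a); first by rewrite subn_gt0.
apply: (iter_cancel (walk_orbit _ _ erefl a) (walk_orbit 0 _ erefl a)).
by rewrite -iterD subnKC ?(ltnW ab) //= E.
Qed.

Lemma path_start y :
  (exists N, iter N phi y \notin S') ->
  exists z r, [/\ z \notin phi @: S', walk S' phi z r & iter r phi z = y].
Proof.
move=> [N yN]; apply: NNPP => no_start.
have ancestor r : exists z, walk S' phi z r /\ iter r phi z = y.
  elim: r => [|r [z [wz Ez]]]; first by exists y.
  have : z \in phi @: S'.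
    by apply: NNPP => /negP zn; apply: no_start; exists z, r.
  case/imsetP => z' z'S Ezz'; exists z'; split; last by rewrite iterSr -Ezz'.
  by move=> [_|l] //; rewrite ltnS iterSr -Ezz'; apply: wz.
have [z [wz Ez]] := ancestor #|S|.
have [a [b [/andP[ab bS] E]]] := iter_repeat z.
have wza : walk S' phi (iter a phi z) (b - a).
  by apply: walk_shift; rewrite subnKC ?(ltnW ab) //; apply: walk_le wz.
have ba0 : 0 < b - a by rewrite subn_gt0.
have Eper : iter (b - a) phi (iter a phi z) = iter a phi z.
  by rewrite -iterD subnK ?(ltnW ab) // E.
have cyc := periodic_all ba0 wza Eper.
move/negP: yN; apply; rewrite -Ez -iterD -(subnK (leq_trans (ltnW ab) bS)).
by rewrite addnA iterD; apply: cyc.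
Qed.

Definition parallel (s t s' t' : S) :=
  exists u v e f, fork u e f s s' /\ fork v e f t t'.

Lemma parallel_swap s t s' t' : parallel s t s' t' -> parallel t s t' s'.
Proof. by move=> [u [v [e [f [Fu Fv]]]]]; exists v, u, e, f. Qed.

Section Dichotomy.

Variable k : int.
Hypothesis k_adm : admissible_k S' phi k.

Definition on_cycle (x : S) :=
  exists p, [/\ 0 < p, (p%:Z %| k)%Z, walk S' phi x p & iter p phi x = x].

Definition short (x : S) := forall e, walk S' phi x e -> ((2 * e)%:Z < k)%R.

Lemma forever_on_cycle x : (forall l, iter l phi x \in S') -> on_cycle x.
Proof.
move=> all_in.
have exP : exists p, (0 < p) && (iter p phi x == x).
  by have [p p0 Ep] := forever_periodic all_in; exists p; rewrite p0 Ep eqxx.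
case: (ex_minnP exP) => p /andP[p0 /eqP Ep] pmin.
have cl : cycle_len S' phi x p.
  split => // l /andP[l0 lp]; apply/negP => /eqP El.
  by have := pmin l; rewrite l0 El eqxx leqNgt lp => /(_ isT).
by exists p; split => //; exact: k_adm.1 x p cl.
Qed.

Lemma start_short z r y :
  z \notin phi @: S' -> walk S' phi z r -> iter r phi z = y ->
  (exists N, iter N phi y \notin S') -> short y.
Proof.
move=> zstart wz Ez [N yN].
have exP : exists n, iter n phi z \notin S' by exists (N + r); rewrite iterD Ez.
case: (ex_minnP exP) => n zn nmin.
have wn : walk S' phi z n.
  by move=> l ln; apply: contraTT ln => lout; rewrite -leqNgt nmin.
have := k_adm.2 z n (And3 zstart wn zn) => kn e we.
have wre : walk S' phi z (r + e) by apply: walk_cat; rewrite ?Ez.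
have : r + e <= n.
  by rewrite leqNgt; apply/negP => nre; move/negP: zn; apply; apply: wre.
lia.
Qed.

Lemma cycle_or_short x : on_cycle x \/ short x.
Proof.
case: (classic (forall l, iter l phi x \in S')) => [all_in|].
  by left; apply: forever_on_cycle.
move=> /not_all_ex_not [N /negP xN]; right.
have [z [r [zs wz Ez]]] := path_start (ex_intro _ N xN).
exact: start_short zs wz Ez (ex_intro _ N xN).
Qed.

(* On paths the displacements agree exactly, and the forks are normalized
   to the same pair of lengths. *)
Lemma parallel_short y1 y2 a1 b1 a2 b2 s t s' t' :
  short y1 -> short y2 -> fork y1 a1 b1 s s' -> fork y2 a2 b2 t t' ->
  (k %| ((b1%:Z - a1%:Z) - (b2%:Z - a2%:Z))%R)%Z -> parallel s t s' t'.
Proof.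
move=> sh1 sh2 F1 F2 dv.
have [wa1 wb1 _ _] := F1; have [wa2 wb2 _ _] := F2.
have k_a1 := sh1 _ wa1; have k_b1 := sh1 _ wb1.
have k_a2 := sh2 _ wa2; have k_b2 := sh2 _ wb2.
have D0 : ((b1%:Z - a1%:Z) - (b2%:Z - a2%:Z) = 0)%R by apply: dvdz_small dv _; lia.
have [Ea Eb] : a1 - b1 = a2 - b2 /\ b1 - a1 = b2 - a2 by lia.
exists (iter (minn a1 b1) phi y1), (iter (minn a2 b2) phi y2), (a1 - b1), (b1 - a1).
by split; [| rewrite Ea Eb]; apply: fork_normalize.
Qed.

(* On a cycle only the displacement modulo the period matters, so the fork
   of s, s' can be rerooted to have the lengths of the fork of t, t'. *)
Lemma parallel_cycle y1 y2 a1 b1 a2 b2 s t s' t' :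
  on_cycle y1 -> fork y1 a1 b1 s s' -> fork y2 a2 b2 t t' ->
  (k %| ((b1%:Z - a1%:Z) - (b2%:Z - a2%:Z))%R)%Z -> parallel s t s' t'.
Proof.
move=> [p [p0 pk wp Ep]] [_ _ -> ->] F2 dv.
have pdv := dvdz_trans pk dv.
have cyc := periodic_all p0 wp Ep.
pose N := a1 + a2 * p.-1.
have walk_cyc n e : walk S' phi (iter n phi y1) e by move=> l _; rewrite -iterD; apply: cyc.
exists (iter N phi y1), y2, a2, b2; split => //.
have EN : a2 + N = a1 + a2 * p by rewrite addnCA -mulnS prednK.
split; rewrite ?walk_cyc // -iterD; apply: iter_congr Ep _.
- by rewrite EN (_ : (_ - _ = - (p%:Z * a2%:Z))%R) ?rpredN ?dvdz_mulr //; lia.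
- rewrite (_ : (_ - _ = (b1%:Z - a1%:Z - (b2%:Z - a2%:Z)) - p%:Z * a2%:Z)%R); last lia.
  by rewrite rpredB // dvdz_mulr.
Qed.

Lemma linked_parallel i j s t s' t' :
  linked k (i, s) (j, s') -> linked k (i, t) (j, t') -> parallel s t s' t'.
Proof.
move=> [y1 [a1 [b1 [F1 dv1]]]] [y2 [a2 [b2 [F2 dv2]]]].
have dv : (k %| ((b1%:Z - a1%:Z) - (b2%:Z - a2%:Z))%R)%Z.
  have -> : ((b1%:Z - a1%:Z) - (b2%:Z - a2%:Z) =
             (j - i - (b2%:Z - a2%:Z)) - (j - i - (b1%:Z - a1%:Z)))%R by lia.
  exact: rpredB.
case: (cycle_or_short y1) => [c1|sh1]; first exact: parallel_cycle c1 F1 F2 dv.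
case: (cycle_or_short y2) => [c2|sh2]; last exact: parallel_short sh1 sh2 F1 F2 dv.
apply: parallel_swap; apply: parallel_cycle c2 F2 F1 _.
by rewrite -rpredN opprB.
Qed.

End Dichotomy.

Variable m : S -> S -> label.
Hypothesis m_phi :
  forall s t, s \in S' -> t \in S' -> s != t -> m s t = m (phi s) (phi t).

Lemma walk_preserves e s t :
  s != t -> walk S' phi s e -> walk S' phi t e ->
  iter e phi s != iter e phi t /\ m s t = m (iter e phi s) (iter e phi t).
Proof.
elim: e => [|e IH] st ws wt //=.
have [ne Em] := IH st (walk_le (leqnSn e) ws) (walk_le (leqnSn e) wt).
have [hs ht] : iter e phi s \in S' /\ iter e phi t \in S' by split; [apply: ws | apply: wt].
split; last by rewrite Em; apply: m_phi.
by apply: contra ne => /eqP E; apply/eqP; apply: phi_inj.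
Qed.

Lemma parallel_preserves s t s' t' :
  parallel s t s' t' -> s != t -> s' != t' /\ m s t = m s' t'.
Proof.
move=> [u [v [e [f [[wue wuf -> ->] [wve wvf -> ->]]]]]] st.
have uv : u != v by apply: contra st => /eqP ->.
have [_ Ee] := walk_preserves uv wue wve.
have [ne Ef] := walk_preserves uv wuf wvf.
by split => //; rewrite -Ee.
Qed.

End Lambda.

Theorem lemma4 (S : finType) (m : S -> S -> label) (S' : {set S}) (phi : S -> S)
    (k : int) :
  artin_system m -> partial_iso m S' phi -> admissible_k S' phi k ->
  forall (i j : int) (s t s' t' : S),
    s != t ->
    psi_eq S' phi k i s j s' ->
    psi_eq S' phi k i t j t' ->
    s' != t' /\ m s t = m s' t'.
Proof.
move=> _ [phi_inj m_phi] k_adm i j s t s' t' st Hs Ht.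
have link_s := psi_eq_linked phi_inj Hs.
have link_t := psi_eq_linked phi_inj Ht.
have par := linked_parallel phi_inj k_adm link_s link_t.
exact (parallel_preserves phi_inj m_phi par st).
Qed.
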